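(* Let $G=(V,E)$ be a graph with $m\ge 1$ edges. Every biased orientation of $G$ has in-degree distribution $p^\flat$ satisfying $H(p^\flat) \le \mathrm{OPT}(G) + 1$.
   Context: All graphs are finite, undirected and loopless, but multiple edges are allowed. For an orientation $\vec G$ of $G$, the in-degree distribution is $p_v := \rho_{\vec G}(v)/m$, where $\rho_{\vec G}(v)$ is the in-degree of $v$ and $m=|E|$. Entropy: $H(p) := \sum_{v\in V} -p_v\log p_v$, $\log$ base $2$, $-0\log 0:=0$. $\mathrm{OPT}(G)$ denotes the minimum of $H(p)$ over in-degree distributions $p$ of orientations of $G$. An orientation of $G$ is biased if each edge $vw$ with $\deg(v)>\deg(w)$ is oriented toward $v$ (edges between vertices of equal degree may be oriented arbitrarily). *)

From Stdlib Require Import Reals List Arith Bool.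
Import ListNotations.
Open Scope R_scope.

(* A (multi)graph on vertex set {0,...,n-1} is given by a list E of edges
   (u,v); repeated entries are parallel edges. Loopless: u <> v. *)
Definition edge := (nat * nat)%type.

Definition valid_graph (n : nat) (E : list edge) : Prop :=
  forall e, In e E -> (fst e < n)%nat /\ (snd e < n)%nat /\ fst e <> snd e.

Definition deg (E : list edge) (v : nat) : nat :=
  length (filter (fun e : edge => Nat.eqb (fst e) v || Nat.eqb (snd e) v) E).

(* An orientation is a list of booleans, one per edge (same length as E):
   edge (u,v) with bit b points toward (head) v if b = true, toward u otherwise. *)
Definition head (e : edge) (b : bool) : nat := if b then snd e else fst e.

Definition is_orientation (E : list edge) (o : list bool) : Prop :=
  length o = length E.

Definition indeg (E : list edge) (o : list bool) (v : nat) : nat :=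
  length (filter (fun eb : edge * bool => Nat.eqb (head (fst eb) (snd eb)) v)
                 (combine E o)).

Definition p_dist (E : list edge) (o : list bool) (v : nat) : R :=
  INR (indeg E o v) / INR (length E).

Definition log2 (x : R) : R := ln x / ln 2.

Definition ent_term (x : R) : R :=
  if Req_EM_T x 0 then 0 else - x * log2 x.

Definition entropy (n : nat) (E : list edge) (o : list bool) : R :=
  fold_right Rplus 0 (map (fun v => ent_term (p_dist E o v)) (seq 0 n)).

Fixpoint bool_lists (k : nat) : list (list bool) :=
  match k with
  | O => [[]]
  | S k' => flat_map (fun l => [true :: l; false :: l]) (bool_lists k')
  end.

Definition OPT (n : nat) (E : list edge) : R :=
  match map (entropy n E) (bool_lists (length E)) with
  | [] => 0
  | x :: l => fold_right Rmin x l
  end.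

Definition biased (E : list edge) (o : list bool) : Prop :=
  is_orientation E o /\
  forall e b, In (e, b) (combine E o) ->
    ((deg E (snd e) < deg E (fst e))%nat -> head e b = fst e) /\
    ((deg E (fst e) < deg E (snd e))%nat -> head e b = snd e).

(* Write m = |E| and, for an orientation o, r_o(v) for the in-degree of v.
   Grouping the vertex sum defining the entropy by the arcs pointing to each
   vertex turns it into an arc sum,
       H(o) = (m ln m - L(o)) / (m ln 2),   L(o) = sum over arcs of ln r_o(head),
   so minimizing the entropy means maximizing the "log-load" L.  With
   M(e) = max(deg u, deg w) for e = uw we show
   (1) L(o') <= sum_e ln M(e) for every orientation o', because the head of
       an arc has in-degree at most its degree, which is at most M(e);
   (2) sum_e ln M(e) <= L(o) + m ln 2 for a biased orientation o: there the
       head of e has degree exactly M(e), and ln x <= x - 1 applied to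
       deg/(2 r_o) reduces the claim to sum_v r_o(v) deg(v) / r_o(v) <= 2m,
       i.e. to the handshake lemma. *)

From Pilot Require Import Defs.
From Stdlib Require Import Reals List Arith Lia Lra.
Open Scope bool_scope.
Open Scope R_scope.

Definition rsum (l : list R) : R := fold_right Rplus 0 l.

Lemma rsum_map_plus {A} (f g : A -> R) (l : list A) :
  rsum (map (fun x => f x + g x) l) = rsum (map f l) + rsum (map g l).
Proof. induction l as [|a l IH]; unfold rsum in *; simpl; [lra|]. rewrite IH. lra. Qed.

Lemma rsum_map_minus {A} (f g : A -> R) (l : list A) :
  rsum (map (fun x => f x - g x) l) = rsum (map f l) - rsum (map g l).
Proof. induction l as [|a l IH]; unfold rsum in *; simpl; [lra|]. rewrite IH. lra. Qed.

Lemma rsum_map_scal {A} (c : R) (f : A -> R) (l : list A) :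
  rsum (map (fun x => c * f x) l) = c * rsum (map f l).
Proof. induction l as [|a l IH]; unfold rsum in *; simpl; [lra|]. rewrite IH. lra. Qed.

Lemma rsum_map_const {A} (c : R) (l : list A) :
  rsum (map (fun _ => c) l) = INR (length l) * c.
Proof.
  induction l as [|a l IH]; unfold rsum in *; simpl length; [simpl; lra|].
  rewrite S_INR. simpl. rewrite IH. lra.
Qed.

Lemma rsum_map_le {A} (f g : A -> R) (l : list A) :
  (forall x, In x l -> f x <= g x) -> rsum (map f l) <= rsum (map g l).
Proof.
  induction l as [|a l IH]; intros H; unfold rsum in *; simpl; [lra|].
  apply Rplus_le_compat; [apply H; simpl; auto | apply IH; intros; apply H; simpl; auto].
Qed.

Lemma rsum_ext {A} (f g : A -> R) (l : list A) :
  (forall x, In x l -> f x = g x) -> rsum (map f l) = rsum (map g l).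
Proof. intros H. f_equal. apply map_ext_in. exact H. Qed.

Lemma rsum_indicator (h : nat) (f : nat -> R) (k a : nat) :
  rsum (map (fun v => INR (if Nat.eqb h v then 1 else 0) * f v) (seq a k))
  = if andb (Nat.leb a h) (Nat.ltb h (a + k)) then f h else 0.
Proof.
  revert a; induction k as [|k IH]; intros a.
  - unfold rsum; simpl.
    destruct (Nat.leb_spec a h), (Nat.ltb_spec h (a + 0)); simpl; try lia; lra.
  - change (seq a (S k)) with (a :: seq (S a) k). unfold rsum in *. simpl map. simpl fold_right.
    rewrite IH.
    destruct (Nat.eqb_spec h a), (Nat.leb_spec a h), (Nat.ltb_spec h (a + S k)),
      (Nat.leb_spec (S a) h), (Nat.ltb_spec h (S a + k)); simpl; try lia; subst; lra.
Qed.

Definition arc_head (x : edge * bool) : nat := Defs.head (fst x) (snd x).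

Definition heads_at (A : list (edge * bool)) (v : nat) : nat :=
  length (filter (fun x => Nat.eqb (arc_head x) v) A).

Lemma indeg_heads_at (E : list edge) (o : list bool) (v : nat) :
  indeg E o v = heads_at (combine E o) v.
Proof. reflexivity. Qed.

Lemma heads_at_cons (x : edge * bool) (A : list (edge * bool)) (v : nat) :
  heads_at (x :: A) v = ((if Nat.eqb (arc_head x) v then 1 else 0) + heads_at A v)%nat.
Proof. unfold heads_at; simpl. destruct (Nat.eqb _ v); reflexivity. Qed.

Lemma heads_at_pos (x : edge * bool) (A : list (edge * bool)) :
  In x A -> (1 <= heads_at A (arc_head x))%nat.
Proof.
  intros H. unfold heads_at.
  assert (Hf : In x (filter (fun y => Nat.eqb (arc_head y) (arc_head x)) A)).
  { apply filter_In; split; auto. apply Nat.eqb_refl. }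
  destruct (filter _ A); [contradiction | simpl; lia].
Qed.

Lemma sum_over_heads (f : nat -> R) (n : nat) (A : list (edge * bool)) :
  (forall x, In x A -> (arc_head x < n)%nat) ->
  rsum (map (fun v => INR (heads_at A v) * f v) (seq 0 n))
  = rsum (map (fun x => f (arc_head x)) A).
Proof.
  induction A as [|a A IH]; intros H.
  - rewrite (rsum_ext _ (fun _ => 0)) by (intros; simpl; ring).
    rewrite rsum_map_const. unfold rsum; simpl; ring.
  - rewrite (rsum_ext _ (fun v => INR (if Nat.eqb (arc_head a) v then 1 else 0) * f v
                                  + INR (heads_at A v) * f v)).
    2: { intros v _. rewrite heads_at_cons, plus_INR. ring. }
    rewrite rsum_map_plus, rsum_indicator, IH by (intros; apply H; simpl; auto).
    assert (Ha : (arc_head a < n)%nat) by (apply H; simpl; auto).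
    destruct (Nat.leb_spec 0 (arc_head a)), (Nat.ltb_spec (arc_head a) (0 + n)); try lia.
    unfold rsum; simpl. ring.
Qed.

Lemma arc_head_lt (n : nat) (E : list edge) (o : list bool) (x : edge * bool) :
  valid_graph n E -> In x (combine E o) -> (arc_head x < n)%nat.
Proof.
  intros Hv Hin. destruct x as [e b]. apply in_combine_l, Hv in Hin.
  unfold arc_head, Defs.head; simpl; destruct b; lia.
Qed.

Lemma rsum_combine_fst (g : edge -> R) (E : list edge) (o : list bool) :
  length o = length E ->
  rsum (map (fun x => g (fst x)) (combine E o)) = rsum (map g E).
Proof.
  revert o; induction E as [|a E IH]; intros o Hl; destruct o as [|b o];
    simpl in *; try discriminate; [reflexivity|].
  unfold rsum in *; simpl. rewrite IH; auto.
Qed.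

Lemma rsum_combine_const (c : R) (E : list edge) (o : list bool) :
  length o = length E -> rsum (map (fun _ => c) (combine E o)) = INR (length E) * c.
Proof. intros Hl. rewrite (rsum_combine_fst (fun _ => c)) by exact Hl. apply rsum_map_const. Qed.

Lemma deg_cons (e : edge) (E : list edge) (v : nat) :
  deg (e :: E) v = ((if Nat.eqb (fst e) v || Nat.eqb (snd e) v then 1 else 0) + deg E v)%nat.
Proof. unfold deg; simpl. destruct (_ || _); reflexivity. Qed.

Lemma degree_sum_le (n : nat) (E : list edge) :
  rsum (map (fun v => INR (deg E v)) (seq 0 n)) <= 2 * INR (length E).
Proof.
  induction E as [|e E IH].
  - rewrite (rsum_ext _ (fun _ => 0)) by reflexivity.
    rewrite rsum_map_const. simpl. lra.
  - rewrite (rsum_ext _ (fun v => INR (if Nat.eqb (fst e) v || Nat.eqb (snd e) v then 1 else 0)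
                                  + INR (deg E v))).
    2: { intros v _. rewrite deg_cons, plus_INR. ring. }
    rewrite rsum_map_plus.
    assert (Hend : rsum (map (fun v => INR (if Nat.eqb (fst e) v || Nat.eqb (snd e) v
                                             then 1 else 0)) (seq 0 n)) <= 2).
    { eapply Rle_trans.
      - apply (rsum_map_le _ (fun v => INR (if Nat.eqb (fst e) v then 1 else 0) * (fun _ => 1) v
                + INR (if Nat.eqb (snd e) v then 1 else 0) * (fun _ => 1) v)).
        intros v _. destruct (Nat.eqb (fst e) v), (Nat.eqb (snd e) v); simpl; lra.
      - rewrite rsum_map_plus, !rsum_indicator.
        destruct (_ && _), (_ && _); lra. }
    simpl length. rewrite S_INR. lra.
Qed.

(* Every arc into v is an edge at v, so in-degrees are bounded by degrees. *)
Lemma indeg_le_deg (E : list edge) (o : list bool) (v : nat) : (indeg E o v <= deg E v)%nat.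
Proof.
  rewrite indeg_heads_at. revert o.
  induction E as [|a E IH]; intros o; destruct o as [|b o]; try (unfold heads_at; simpl; lia).
  change (combine (a :: E) (b :: o)) with ((a, b) :: combine E o).
  rewrite heads_at_cons, deg_cons. specialize (IH o).
  destruct (Nat.eqb (arc_head (a, b)) v) eqn:H.
  - apply Nat.eqb_eq in H. unfold arc_head, Defs.head in H; simpl in H.
    destruct b; subst; rewrite Nat.eqb_refl, ?Bool.orb_true_r; simpl; lia.
  - destruct (_ || _); lia.
Qed.

Lemma ln2_pos : 0 < ln 2.
Proof. pose proof ln_lt_2. lra. Qed.

Lemma ent_term_count (k : nat) (m : R) : 0 < m ->
  ent_term (INR k / m) = INR k * (/ (m * ln 2) * (ln m - ln (INR k))).
Proof.
  intros Hm. pose proof ln2_pos. unfold ent_term.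
  destruct k as [|k].
  - simpl INR. rewrite Rdiv_0_l. destruct (Req_EM_T 0 0); [ring | congruence].
  - assert (Hk : 0 < INR (S k)) by (apply lt_0_INR; lia).
    assert (Hq : 0 < INR (S k) / m) by (apply Rdiv_lt_0_compat; auto).
    destruct (Req_EM_T _ 0) as [Hz|_]; [lra|].
    unfold log2, Rdiv. rewrite ln_mult, ln_Rinv by (auto; apply Rinv_0_lt_compat; auto).
    field. split; lra.
Qed.

Definition log_load (E : list edge) (o : list bool) : R :=
  rsum (map (fun x => ln (INR (indeg E o (arc_head x)))) (combine E o)).

Lemma entropy_arc_form (n : nat) (E : list edge) (o : list bool) :
  valid_graph n E -> (1 <= length E)%nat -> length o = length E ->
  entropy n E o
  = (INR (length E) * ln (INR (length E)) - log_load E o) / (INR (length E) * ln 2).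
Proof.
  intros Hv Hm Hl.
  assert (Hmp : 0 < INR (length E)) by (apply lt_0_INR; lia).
  pose proof ln2_pos.
  unfold entropy, p_dist. change (fold_right Rplus 0) with rsum.
  rewrite (rsum_ext _ (fun v => INR (heads_at (combine E o) v) *
      (/ (INR (length E) * ln 2) * (ln (INR (length E)) - ln (INR (indeg E o v)))))).
  2: { intros v _. rewrite ent_term_count by exact Hmp. reflexivity. }
  rewrite sum_over_heads by (intros; eapply arc_head_lt; eauto).
  rewrite rsum_map_scal, rsum_map_minus, rsum_combine_const by exact Hl.
  unfold log_load. field. lra.
Qed.

(* The larger of the two end degrees of an edge, and the resulting edge sum
   sum_e ln M(e), which sits between the log-loads of all orientations and
   that of a biased one. *)
Definition max_end_degree (E : list edge) (e : edge) : nat :=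
  Nat.max (deg E (fst e)) (deg E (snd e)).

Definition max_degree_load (E : list edge) : R :=
  rsum (map (fun e => ln (INR (max_end_degree E e))) E).

Lemma ln_le_mono (x y : R) : 0 < x -> x <= y -> ln x <= ln y.
Proof. intros Hx Hxy. apply Rnot_lt_le. intros Hlt. apply ln_lt_inv in Hlt; lra. Qed.

Lemma log_load_le_max_degree_load (E : list edge) (o : list bool) :
  length o = length E -> log_load E o <= max_degree_load E.
Proof.
  intros Hl. unfold max_degree_load.
  rewrite <- (rsum_combine_fst (fun e => ln (INR (max_end_degree E e))) E o Hl).
  apply rsum_map_le. intros [e b] Hin.
  pose proof (heads_at_pos _ _ Hin) as Hpos.
  pose proof (indeg_le_deg E o (arc_head (e, b))) as Hdeg.
  assert (Hmax : (deg E (arc_head (e, b)) <= max_end_degree E e)%nat)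
    by (unfold arc_head, Defs.head, max_end_degree; destruct b; simpl; lia).
  rewrite indeg_heads_at in *.
  apply ln_le_mono; [apply lt_0_INR | apply le_INR]; simpl fst; lia.
Qed.

Lemma biased_head_degree (E : list edge) (o : list bool) (e : edge) (b : bool) :
  biased E o -> In (e, b) (combine E o) -> deg E (arc_head (e, b)) = max_end_degree E e.
Proof.
  intros [_ Hb] Hin. destruct (Hb e b Hin) as [Hfst Hsnd].
  unfold arc_head, max_end_degree; simpl.
  destruct (lt_eq_lt_dec (deg E (fst e)) (deg E (snd e))) as [[Hlt|Heq]|Hgt].
  - rewrite Hsnd by exact Hlt. lia.
  - destruct b; simpl; lia.
  - rewrite Hfst by exact Hgt. lia.
Qed.

(* ln a - ln b <= a/b - 1, from exp y >= 1 + y. *)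
Lemma ln_ratio_le (a b : R) : 0 < a -> 0 < b -> ln a - ln b <= a / b - 1.
Proof.
  intros Ha Hb. assert (Hq : 0 < a / b) by (apply Rdiv_lt_0_compat; auto).
  pose proof (exp_ineq1_le (ln (a / b))) as Hexp. rewrite exp_ln in Hexp by exact Hq.
  unfold Rdiv in *. rewrite ln_mult, ln_Rinv in Hexp by (auto; apply Rinv_0_lt_compat; auto).
  lra.
Qed.

(* Summed over arcs, deg(head)/indeg(head) counts each vertex's degree once,
   so by the handshake lemma it is at most 2m. *)
Lemma sum_degree_over_indeg (n : nat) (E : list edge) (o : list bool) :
  valid_graph n E ->
  rsum (map (fun x => INR (deg E (arc_head x)) / INR (indeg E o (arc_head x))) (combine E o))
  <= 2 * INR (length E).
Proof.
  intros Hv.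
  rewrite <- (sum_over_heads (fun v => INR (deg E v) / INR (indeg E o v)) n)
    by (intros; eapply arc_head_lt; eauto).
  eapply Rle_trans; [|apply (degree_sum_le n E)].
  apply rsum_map_le. intros v _. rewrite <- indeg_heads_at.
  destruct (indeg E o v) as [|k].
  - simpl. pose proof (pos_INR (deg E v)). lra.
  - right. field. apply not_0_INR. lia.
Qed.

Lemma biased_log_load (n : nat) (E : list edge) (o : list bool) :
  valid_graph n E -> biased E o ->
  max_degree_load E <= log_load E o + INR (length E) * ln 2.
Proof.
  intros Hv Hb. assert (Hl : length o = length E) by apply Hb.
  assert (Harc : forall x, In x (combine E o) ->
     ln (INR (max_end_degree E (fst x))) - ln 2 - ln (INR (indeg E o (arc_head x)))
     <= / 2 * (INR (deg E (arc_head x)) / INR (indeg E o (arc_head x))) - 1).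
  { intros [e b] Hin. simpl fst. rewrite <- (biased_head_degree E o e b Hb Hin).
    pose proof (heads_at_pos _ _ Hin) as Hpos.
    pose proof (indeg_le_deg E o (arc_head (e, b))) as Hdeg.
    rewrite indeg_heads_at in *.
    set (d := INR (deg E (arc_head (e, b)))).
    set (r := INR (heads_at (combine E o) (arc_head (e, b)))).
    assert (Hr : 0 < r) by (apply lt_0_INR; lia).
    assert (Hd : 0 < d) by (apply lt_0_INR; lia).
    pose proof ln2_pos.
    pose proof (ln_ratio_le d (2 * r) Hd ltac:(lra)) as Hratio.
    rewrite ln_mult in Hratio by lra.
    replace (/ 2 * (d / r)) with (d / (2 * r)) by (field; lra).
    lra. }
  pose proof (rsum_map_le _ _ _ Harc) as Hsum.
  rewrite !rsum_map_minus, rsum_map_scal, !rsum_combine_const,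
    (rsum_combine_fst (fun e => ln (INR (max_end_degree E e)))) in Hsum by exact Hl.
  pose proof (sum_degree_over_indeg n E o Hv).
  unfold log_load, max_degree_load. lra.
Qed.

Lemma fold_Rmin_in (x : R) (l : list R) : In (fold_right Rmin x l) (x :: l).
Proof.
  induction l as [|a l IH]; simpl; auto.
  set (y := fold_right Rmin x l) in *.
  assert (Hmin : Rmin a y = a \/ Rmin a y = y) by (unfold Rmin; destruct (Rle_dec a y); auto).
  destruct Hmin as [-> | ->]; [auto|]. destruct IH; auto.
Qed.

Lemma bool_lists_length (k : nat) (l : list bool) : In l (bool_lists k) -> length l = k.
Proof.
  revert l; induction k as [|k IH]; intros l H; simpl in H.
  - destruct H as [H|[]]; subst; reflexivity.
  - apply in_flat_map in H. destruct H as [l' [H1 H2]].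
    simpl in H2. destruct H2 as [H2|[H2|[]]]; subst; simpl; f_equal; auto.
Qed.

Lemma bool_lists_nonempty (k : nat) : In (repeat false k) (bool_lists k).
Proof.
  induction k as [|k IH]; simpl; auto.
  apply in_flat_map. exists (repeat false k). split; simpl; auto.
Qed.

Lemma OPT_attained (n : nat) (E : list edge) :
  exists o', length o' = length E /\ OPT n E = entropy n E o'.
Proof.
  unfold OPT.
  pose proof (in_map (entropy n E) _ _ (bool_lists_nonempty (length E))) as Hin.
  destruct (map (entropy n E) (bool_lists (length E))) as [|x l] eqn:Hm; [destruct Hin|].
  pose proof (fold_Rmin_in x l) as H. rewrite <- Hm in H.
  apply in_map_iff in H. destruct H as [o' [Heq Ho']].
  exists o'. split; [apply bool_lists_length; exact Ho' | symmetry; exact Heq].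
Qed.

Theorem theorem2 (n : nat) (E : list edge) (o : list bool) :
  valid_graph n E ->
  (1 <= length E)%nat ->
  biased E o ->
  entropy n E o <= OPT n E + 1.
Proof.
  intros Hv Hm Hb.
  destruct (OPT_attained n E) as [o' [Hl' ->]].
  assert (Hl : length o = length E) by apply Hb.
  rewrite !(entropy_arc_form n E) by assumption.
  pose proof (log_load_le_max_degree_load E o' Hl') as Hupper.
  pose proof (biased_log_load n E o Hv Hb) as Hlower.
  assert (Hmpos : 0 < INR (length E)) by (apply lt_0_INR; lia).
  pose proof ln2_pos as Hln2.
  assert (Hden : 0 < INR (length E) * ln 2) by (apply Rmult_lt_0_compat; assumption).
  set (c := INR (length E) * ln (INR (length E))).
  replace ((c - log_load E o') / (INR (length E) * ln 2) + 1)
    with ((c - log_load E o' + INR (length E) * ln 2) / (INR (length E) * ln 2)) by (field; split; lra).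
  apply Rmult_le_compat_r; [left; apply Rinv_0_lt_compat; exact Hden | lra].
Qed.
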